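(* Let $f:\mathbb{R}^{M}\times\Theta\to\mathbb{R}^N$ (with $N\ge1$) be a network built from $L$ linear layers as follows: $\mathbf{x}^1=\mathbf{x}$, $\mathbf{x}^{l+1}=\sigma_l(\mathbf{W}_l\mathbf{x}^l;\boldsymbol{\beta}_l)$ for $l=1,\dots,L-1$, and $f(\mathbf{x};\boldsymbol{\theta})=\sigma_L(\mathbf{W}_L\mathbf{x}^L;\boldsymbol{\beta}_L)$, where $\mathbf{W}_l$ are weight matrices, $\sigma_l$ are differentiable maps possibly with extra parameters $\boldsymbol{\beta}_l$, and $\boldsymbol{\theta}=(\mathbf{W}_1,\boldsymbol{\beta}_1,\dots,\mathbf{W}_L,\boldsymbol{\beta}_L)$; $f$ is assumed twice differentiable in $\boldsymbol{\theta}$. For each $l$ let $f^l$ denote the map from the input $\mathbf{x}^l$ of the $l$-th linear layer to the network output (with parameters fixed). Let $(\mathbf{x}_i,\mathbf{y}_i)_{i=1}^n$ be training data, let $\mathbf{x}_i^l$ be the input to the $l$-th linear layer when the network input is $\mathbf{x}_i$, and assume all $\mathbf{x}_i^l\ne0$. Let $\boldsymbol{\theta}^*$ be an exact interpolation solution ($f(\mathbf{x}_i;\boldsymbol{\theta}^* )=\mathbf{y}_i$ for all $i$). Then $$\sum_{l=1}^L dV_{f^l}\le \frac{N^{-N/2}}{n}\sum_{l=1}^L\sum_{i=1}^n\|J_{f^l}(\mathbf{x}_i^l)\|_F^N\le \frac1n\sqrt{\sum_{l=1}^L\sum_{i=1}^n\frac{\|\mathbf{W}_l\|_2^{2N}}{\|\mathbf{x}_i^l\|_2^{2N}}}\cdot\left(\frac{n\,S(\boldsymbol{\theta}^*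 )}{N}\right)^{N/2}.$$
   Context: The loss is $L(\boldsymbol{\theta})=\frac1n\sum_{i=1}^n\frac12\|f(\mathbf{x}_i;\boldsymbol{\theta})-\mathbf{y}_i\|_2^2$ and the sharpness is $S(\boldsymbol{\theta})=\operatorname{Tr}(\nabla^2_{\boldsymbol{\theta}}L(\boldsymbol{\theta}))$. $J_{f^l}(\mathbf{x}^l)$ is the Jacobian ($N$ rows) of $f^l$ at $\mathbf{x}^l$ with parameters $\boldsymbol{\theta}^*$. The local volumetric ratio of $f^l$ at $\mathbf{x}^l$ is $\sqrt{\det(J_{f^l}(\mathbf{x}^l)J_{f^l}(\mathbf{x}^l)^T)}$, and $dV_{f^l}=\frac1n\sum_{i=1}^n\sqrt{\det(J_{f^l}(\mathbf{x}_i^l)J_{f^l}(\mathbf{x}_i^l)^T)}$; the sum $\sum_l dV_{f^l}$ is the Network Volumetric Ratio. $\|\cdot\|_2$ is the Euclidean/spectral norm and $\|\cdot\|_F$ the Frobenius norm. *)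

From HB Require Import structures.
From mathcomp Require Import all_boot all_order all_algebra.
From mathcomp Require Import all_classical all_reals all_analysis.
Import Order.TTheory GRing.Theory Num.Theory numFieldNormedType.Exports.
Local Open Scope ring_scope.
Local Open Scope classical_set_scope.

(* Layer l (0-indexed, l = 0 .. L-1, paper's layer l+1):
     input  x^l : 'cV_(d l)     (d 0 = M, d L = N)
     weight W l : 'M_(e l, d l)
     extra parameters  B l : 'cV_(p l)
     activation  sigma l : 'cV_(e l) -> 'cV_(p l) -> 'cV_(d l.+1)
   x^{l+1} = sigma l (W l *m x^l) (B l). *)

Section Network.
Context {R : realType} (d e p : nat -> nat)
  (sigma : forall l, 'cV[R]_(e l) -> 'cV[R]_(p l) -> 'cV[R]_(d l.+1)).

Definition layer (W : forall l, 'M[R]_(e l, d l)) (B : forall l, 'cV[R]_(p l))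
  (l : nat) (x : 'cV[R]_(d l)) : 'cV[R]_(d l.+1) :=
  sigma l (W l *m x) (B l).

Fixpoint fwd W B (l : nat) : 'cV[R]_(d 0) -> 'cV[R]_(d l) :=
  match l return 'cV[R]_(d 0) -> 'cV[R]_(d l) with
  | 0 => fun x => x
  | l'.+1 => fun x => layer W B l' (fwd W B l' x)
  end.

Fixpoint run W B (k l : nat) : 'cV[R]_(d l) -> 'cV[R]_(d (k + l)) :=
  match k return 'cV[R]_(d l) -> 'cV[R]_(d (k + l)) with
  | 0 => fun x => x
  | k'.+1 => fun x => layer W B (k' + l) (run W B k' l x)
  end.

(* f^l : map from the input x^l of layer l to the network output
   (output space 'cV_(d (L - l + l)) = 'cV_(d L) = R^N for l <= L) *)
Definition fl W B (L l : nat) : 'cV[R]_(d l) -> 'cV[R]_(d (L - l + l)) :=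
  run W B (L - l) l.

Definition net W B (L : nat) : 'cV[R]_(d 0) -> 'cV[R]_(d L) := fwd W B L.

Definition sqnorm2 {m : nat} (v : 'cV[R]_m) : R := \sum_(i < m) (v i 0) ^+ 2.

Definition loss (L n : nat) (X : 'I_n -> 'cV[R]_(d 0)) (Y : 'I_n -> 'cV[R]_(d L))
  W B : R :=
  n%:R^-1 * \sum_(i < n) 2^-1 * sqnorm2 (net W B L (X i) - Y i).

Definition Wpert (W : forall l, 'M[R]_(e l, d l)) (l0 i0 j0 : nat) (t : R) :
  forall l, 'M[R]_(e l, d l) :=
  fun l => \matrix_(i, j) (W l i j +
     (if [&& l == l0, (i : nat) == i0 & (j : nat) == j0] then t else 0)).

Definition Bpert (B : forall l, 'cV[R]_(p l)) (l0 k0 : nat) (t : R) :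
  forall l, 'cV[R]_(p l) :=
  fun l => \col_k (B l k 0 +
     (if (l == l0) && ((k : nat) == k0) then t else 0)).

Definition d2 (phi : R -> R) (t : R) : R := derive1 (derive1 phi) t.

(* sharpness S(theta) = Tr (Hessian of the loss w.r.t. theta)
   = sum over all coordinates theta_k of d^2/dt^2 L(theta + t e_k) |_{t=0} *)
Definition sharpness (L n : nat) X Y W B : R :=
  \sum_(l < L)
    ((\sum_(i < e l) \sum_(j < d l)
        d2 (fun t => loss L n X Y (Wpert W l i j t) B) 0)
     + \sum_(k < p l) d2 (fun t => loss L n X Y W (Bpert B l k t)) 0).

End Network.

Definition jac {R : realType} {m q : nat} (g : 'cV[R]_m -> 'cV[R]_q)
  (x : 'cV[R]_m) : 'M[R]_(q, m) :=
  \matrix_(i, j) ('d g x (delta_mx j 0) : 'cV[R]_q) i 0.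

Definition volratio {R : realType} {m q : nat} (g : 'cV[R]_m -> 'cV[R]_q)
  (x : 'cV[R]_m) : R :=
  Num.sqrt (\det (jac g x *m (jac g x)^T)).

Definition norm2 {R : realType} {m : nat} (v : 'cV[R]_m) : R :=
  Num.sqrt (\sum_(i < m) (v i 0) ^+ 2).

Definition frob {R : realType} {m q : nat} (A : 'M[R]_(q, m)) : R :=
  Num.sqrt (\sum_(i < q) \sum_(j < m) (A i j) ^+ 2).

Definition specnorm {R : realType} {m q : nat} (A : 'M[R]_(q, m)) : R :=
  sup [set norm2 (A *m v) | v in [set v : 'cV[R]_m | norm2 v <= 1]].

From HB Require Import structures.
From mathcomp Require Import all_boot all_order all_algebra.
From mathcomp Require Import all_classical all_reals all_analysis.
From mathcomp Require Import ring lra zify.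
Import Order.TTheory GRing.Theory Num.Theory numFieldNormedType.Exports.

(* Write f^l = h \o (W_l *m _), where h is the part of the network after the
   l-th linear map.  Then J_{f^l}(x^l) = J_h W_l, whereas the derivative of the
   output in the weight (W_l)_ij is x^l_j J_h e_i; hence
     ||J_{f^l}||_F ||x^l|| <= ||W_l||_2 ||J_h||_F ||x^l||
                          = ||W_l||_2 sqrt (sum_ij ||d f / d (W_l)_ij||^2).
   At an interpolation point the trace of the Hessian of the loss is
   n^-1 sum_i sum_theta ||d f(x_i) / d theta||^2 >= the weight part of this sum,
   and Cauchy-Schwarz over (l, i) yields the second inequality.  The first one
   is Hadamard's inequality det (J J^T) <= prod_k ||row_k J||^2 followed by
   AM-GM. *)

Set Implicit Arguments.
Unset Strict Implicit.
Unset Printing Implicit Defensive.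

Local Open Scope ring_scope.

Section EuclideanNorms.
Variable R : realType.

Lemma sumr_sqr_ge0 (I : finType) (u : I -> R) : 0 <= \sum_i u i ^+ 2.
Proof. by apply: sumr_ge0 => i _; exact: sqr_ge0. Qed.

Lemma cauchy_schwarz (I : finType) (u v : I -> R) :
  (\sum_i u i * v i) ^+ 2 <= (\sum_i u i ^+ 2) * (\sum_i v i ^+ 2).
Proof.
(* Lagrange's identity: the gap is half of the sum of all (u_i v_j - u_j v_i)^2. *)
pose F := \sum_i \sum_j (u i ^+ 2 * v j ^+ 2 - u i * v i * (u j * v j)).
have lagrange : \sum_i \sum_j (u i * v j - u j * v i) ^+ 2 = F + F.
  rewrite [in RHS]/F [X in _ + X]exchange_big -big_split; apply: eq_bigr => i _.
  by rewrite -big_split; apply: eq_bigr => j _ /=; ring.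
have FE : F = (\sum_i u i ^+ 2) * (\sum_i v i ^+ 2) - (\sum_i u i * v i) ^+ 2.
  rewrite /F expr2 !big_distrlr /= -sumrB; apply: eq_bigr => i _.
  by rewrite -sumrB.
have : 0 <= F + F.
  by rewrite -lagrange; apply: sumr_ge0 => i _; exact: sumr_sqr_ge0.
rewrite FE; lra.
Qed.

Lemma cauchy_schwarz_sqrt (I : finType) (u v : I -> R) :
  \sum_i u i * v i <= Num.sqrt (\sum_i u i ^+ 2) * Num.sqrt (\sum_i v i ^+ 2).
Proof.
rewrite -sqrtrM ?sumr_sqr_ge0 //; apply: (le_trans (ler_norm _)).
by rewrite -sqrtr_sqr ler_sqrt ?cauchy_schwarz // mulr_ge0 ?sumr_sqr_ge0.
Qed.

Lemma norm2_ge0 m (v : 'cV[R]_m) : 0 <= norm2 v.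
Proof. exact: sqrtr_ge0. Qed.

Lemma norm2_sqr m (v : 'cV[R]_m) : norm2 v ^+ 2 = sqnorm2 v.
Proof. by rewrite sqr_sqrtr ?sumr_sqr_ge0. Qed.

Lemma norm2_0 m : norm2 (0 : 'cV[R]_m) = 0.
Proof. by rewrite /norm2 big1 ?sqrtr0 // => i _; rewrite mxE expr0n. Qed.

Lemma norm2_eq0 m (v : 'cV[R]_m) : (norm2 v == 0) = (v == 0).
Proof.
apply/idP/eqP => [|->]; last by rewrite norm2_0.
rewrite sqrtr_eq0 => sum_le0; apply/matrixP => i j; rewrite ord1 mxE.
have sum0 : \sum_i v i 0 ^+ 2 = 0 by apply/eqP; rewrite eq_le sum_le0 sumr_sqr_ge0.
by apply/eqP; rewrite -sqrf_eq0 (psumr_eq0P (fun i _ => sqr_ge0 (v i 0)) sum0).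
Qed.

Lemma norm2_gt0 m (v : 'cV[R]_m) : v != 0 -> 0 < norm2 v.
Proof. by rewrite lt0r norm2_ge0 norm2_eq0 andbT. Qed.

Lemma norm2Z m c (v : 'cV[R]_m) : norm2 (c *: v) = `|c| * norm2 v.
Proof.
rewrite /norm2 -sqrtr_sqr -sqrtrM ?sqr_ge0 // mulr_sumr.
by congr Num.sqrt; apply: eq_bigr => i _; rewrite mxE exprMn.
Qed.

Lemma frob_ge0 q m (A : 'M[R]_(q, m)) : 0 <= frob A.
Proof. exact: sqrtr_ge0. Qed.

Lemma frob_sqr q m (A : 'M[R]_(q, m)) : frob A ^+ 2 = \sum_i \sum_j A i j ^+ 2.
Proof. by rewrite sqr_sqrtr //; apply: sumr_ge0 => i _; exact: sumr_sqr_ge0. Qed.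

Lemma norm2_mulmx_le_frob q m (A : 'M[R]_(q, m)) v :
  norm2 (A *m v) <= frob A * norm2 v.
Proof.
rewrite -sqrtrM; last by apply: sumr_ge0 => i _; exact: sumr_sqr_ge0.
rewrite ler_sqrt; last by rewrite mulr_ge0 ?sumr_sqr_ge0 //; apply: sumr_ge0 => *; exact: sumr_sqr_ge0.
rewrite mulr_suml; apply: ler_sum => i _; rewrite mxE.
exact: cauchy_schwarz (fun j => A i j) (fun j => v j 0).
Qed.

Local Open Scope classical_set_scope.

Lemma specnorm_has_sup q m (A : 'M[R]_(q, m)) :
  has_sup [set norm2 (A *m v) | v in [set v : 'cV[R]_m | norm2 v <= 1]].
Proof.
split; first by exists 0, 0; rewrite /= ?mulmx0 norm2_0.
exists (frob A) => _ [v /= v_le1 <-].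
apply: (@le_trans _ _ (frob A * norm2 v)); first exact: norm2_mulmx_le_frob.
by rewrite -[leRHS]mulr1 ler_wpM2l ?frob_ge0.
Qed.

Lemma specnorm_ge0 q m (A : 'M[R]_(q, m)) : 0 <= specnorm A.
Proof.
have := sup_upper_bound (specnorm_has_sup A); apply.
by exists 0; rewrite /= ?mulmx0 norm2_0.
Qed.

Lemma norm2_mulmx_le q m (A : 'M[R]_(q, m)) v :
  norm2 (A *m v) <= specnorm A * norm2 v.
Proof.
have [->|v_neq0] := eqVneq v 0; first by rewrite mulmx0 !norm2_0 mulr0.
have v_gt0 := norm2_gt0 v_neq0.
have : norm2 (A *m ((norm2 v)^-1 *: v)) <= specnorm A.
  have := sup_upper_bound (specnorm_has_sup A); apply; exists ((norm2 v)^-1 *: v) => //=.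
  by rewrite norm2Z ger0_norm ?invr_ge0 ?norm2_ge0 // mulVf ?gt_eqF.
by rewrite -scalemxAr norm2Z ger0_norm ?invr_ge0 ?norm2_ge0 // ler_pdivrMl // mulrC.
Qed.

Lemma norm2_trmx_mulmx_le q m (A : 'M[R]_(q, m)) (u : 'cV[R]_q) :
  norm2 (A^T *m u) <= specnorm A * norm2 u.
Proof.
set y := A^T *m u.
have [y0|y_neq0] := eqVneq y 0.
  by rewrite y0 norm2_0 mulr_ge0 ?specnorm_ge0 ?norm2_ge0.
(* |y|^2 = <u, A y> <= |u| |A y| <= |u| |A| |y| *)
have dotE : norm2 y ^+ 2 = \sum_k u k 0 * (A *m y) k 0.
  rewrite norm2_sqr /sqnorm2.
  transitivity (\sum_i \sum_k u k 0 * (A k i * y i 0)).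
    apply: eq_bigr => i _; rewrite expr2 {1}/y mxE mulr_sumr.
    by apply: eq_bigr => k _; rewrite mxE; ring.
  by rewrite exchange_big; apply: eq_bigr => k _; rewrite mxE mulr_sumr.
have : norm2 y * norm2 y <= norm2 y * (specnorm A * norm2 u).
  rewrite -expr2 dotE; apply: (le_trans (cauchy_schwarz_sqrt _ _)).
  rewrite [leRHS]mulrCA mulrA [leLHS]mulrC.
  by rewrite ler_wpM2r ?norm2_ge0 ?norm2_mulmx_le.
by rewrite ler_pM2l ?norm2_gt0.
Qed.

Lemma frob_mulmx_le a b c (G : 'M[R]_(a, b)) (A : 'M[R]_(b, c)) :
  frob (G *m A) <= frob G * specnorm A.
Proof.
have A_ge0 := specnorm_ge0 A.
rewrite -(ger0_norm A_ge0) -sqrtr_sqr -sqrtrM; last by apply: sumr_ge0 => *; exact: sumr_sqr_ge0.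
rewrite ler_sqrt; last by rewrite mulr_ge0 ?sqr_ge0 //; apply: sumr_ge0 => *; exact: sumr_sqr_ge0.
rewrite mulr_suml; apply: ler_sum => r _.
have rowE (M : 'M[R]_(a, _)) : \sum_j M r j ^+ 2 = norm2 (row r M)^T ^+ 2.
  by rewrite norm2_sqr; apply: eq_bigr => j _; rewrite !mxE.
rewrite !rowE row_mul trmx_mul -exprMn mulrC.
by rewrite lerXn2r ?nnegrE ?mulr_ge0 ?norm2_ge0 ?norm2_trmx_mulmx_le.
Qed.

End EuclideanNorms.

Section GramDeterminant.
Variable R : realType.

Lemma gram_diagE q m (A : 'M[R]_(q, m)) k : (A *m A^T) k k = \sum_j A k j ^+ 2.
Proof. by rewrite mxE; apply: eq_bigr => j _; rewrite mxE expr2. Qed.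

Lemma gram_diag_ge0 q m (A : 'M[R]_(q, m)) k : 0 <= (A *m A^T) k k.
Proof. by rewrite gram_diagE sumr_sqr_ge0. Qed.

Lemma gram_row_eq0 m (u : 'rV[R]_m) : (u *m u^T) 0 0 = 0 -> u = 0.
Proof.
rewrite gram_diagE => sum0; apply/rowP => j; rewrite mxE.
by apply/eqP; rewrite -sqrf_eq0 (psumr_eq0P (fun j _ => sqr_ge0 (u 0 j)) sum0).
Qed.

Lemma pythagoras_gram_le m (r s : 'rV[R]_m) :
  (r *m s^T) 0 0 = 0 -> (r *m r^T) 0 0 <= ((r + s) *m (r + s)^T) 0 0.
Proof.
move=> rs0; have sr0 : (s *m r^T) 0 0 = 0 by rewrite -[s]trmxK -trmx_mul mxE.
rewrite linearD /= mulmxDl !mulmxDr; have := gram_diag_ge0 s 0.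
move: rs0 sr0; move: (r *m r^T) (r *m s^T) (s *m r^T) (s *m s^T) => rr rs sr ss.
by rewrite !mxE => -> -> ss_ge0; rewrite add0r addr0 lerDl.
Qed.

Lemma det_gram_col_mx_eq0 m N (a : 'rV[R]_m) (A : 'M[R]_(N, m)) :
  \det (A *m A^T) = 0 -> \det (col_mx a A *m (col_mx a A)^T) = 0.
Proof.
move/eqP/det0P => [v v_neq0 vAA0].
have vA0 : v *m A = 0.
  by apply: gram_row_eq0; rewrite trmx_mul mulmxA -(mulmxA v) vAA0 mul0mx mxE.
apply/eqP/det0P; exists (row_mx 0 v); first by rewrite row_mx_eq0 negb_and v_neq0 orbT.
by rewrite mulmxA mul_row_col mul0mx add0r vA0 mul0mx.
Qed.

(* Subtracting from the first row a combination of the others is a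
   unimodular row operation, after which the Gram matrix is block triangular. *)
Lemma det_gram_col_mx m N (a r : 'rV[R]_m) (c : 'rV[R]_N) (A : 'M[R]_(N, m)) :
  a = r + c *m A -> r *m A^T = 0 ->
  \det (col_mx a A *m (col_mx a A)^T) = (r *m r^T) 0 0 * \det (A *m A^T).
Proof.
move=> aE rA0.
pose E : 'M[R]_(1 + N) := block_mx 1%:M (- c) 0 1%:M.
have EaA : E *m col_mx a A = col_mx r A.
  by rewrite mul_block_col !mul1mx mul0mx add0r mulNmx aE addrK.
have -> : \det (col_mx a A *m (col_mx a A)^T) = \det (col_mx r A *m (col_mx r A)^T).
  have -> : col_mx r A *m (col_mx r A)^T = E *m (col_mx a A *m (col_mx a A)^T) *m E^T.
    by rewrite -EaA trmx_mul !mulmxA.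
  by rewrite !det_mulmx det_tr det_ublock !det1 mulr1 mul1r mulr1.
by rewrite tr_col_mx mul_col_row rA0 det_lblock det_mx11.
Qed.

Lemma det_gram_hadamard N m (A : 'M[R]_(N, m)) :
  0 <= \det (A *m A^T) <= \prod_k (A *m A^T) k k.
Proof.
elim: N A => [|N IH] A; first by rewrite det_mx00 big_ord0 ler01 lexx.
have := vsubmxK (A : 'M[R]_(1 + N, m)); move: (usubmx _) (dsubmx _) => a {}A <-.
have diagE : \prod_k (col_mx a A *m (col_mx a A)^T) k k =
             (a *m a^T) 0 0 * \prod_k (A *m A^T) k k.
  rewrite tr_col_mx mul_col_row big_ord_recl; congr (_ * _).
    by rewrite (_ : ord0 = lshift N (0 : 'I_1)) ?block_mxEul //; apply: val_inj.
  apply: eq_bigr => k _.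
  by rewrite (_ : lift ord0 k = rshift 1 k) ?block_mxEdr //; apply: val_inj.
rewrite diagE; have /andP[detA_ge0 detA_le] := IH A.
have [/(det_gram_col_mx_eq0 a) -> | detA_neq0] := eqVneq (\det (A *m A^T)) 0.
  by rewrite lexx mulr_ge0 ?gram_diag_ge0 ?(le_trans detA_ge0 detA_le).
have AA_unit : A *m A^T \in unitmx by rewrite unitmxE unitfE.
pose c := a *m A^T *m invmx (A *m A^T); pose r := a - c *m A.
have rA0 : r *m A^T = 0 by rewrite mulmxBl -mulmxA mulmxKV // subrr.
have rc0 : (r *m (c *m A)^T) 0 0 = 0 by rewrite trmx_mul mulmxA rA0 mul0mx mxE.
rewrite (det_gram_col_mx (r := r) (c := c)) ?subrK //.
rewrite mulr_ge0 ?gram_diag_ge0 //= ler_pM ?gram_diag_ge0 //.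
by have := pythagoras_gram_le rc0; rewrite subrK.
Qed.

End GramDeterminant.

Section HalfPowers.
Variable R : realType.

Lemma sqrtrX (x : R) N : 0 <= x -> Num.sqrt (x ^+ N) = Num.sqrt x ^+ N.
Proof.
move=> x_ge0; rewrite -[x in LHS](sqr_sqrtr x_ge0) exprAC sqrtr_sqr.
by rewrite ger0_norm // exprn_ge0 // sqrtr_ge0.
Qed.

Lemma powR_half (x : R) N : 0 <= x -> x `^ (N%:R / 2) = Num.sqrt x ^+ N.
Proof.
by move=> x_ge0; rewrite mulrC powRrM powR12_sqrt // powR_mulrn // sqrtr_ge0.
Qed.

Lemma powR_Nhalf N : (N%:R : R) `^ (- (N%:R / 2)) = (Num.sqrt N%:R ^+ N)^-1.
Proof. by rewrite powRN powR_half. Qed.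

End HalfPowers.

Section PowerSums.
Variable R : realType.

Lemma sum_exprn_le (I : finType) (a : I -> R) N : (0 < N)%N ->
  (forall i, 0 <= a i) -> \sum_i a i ^+ N <= (\sum_i a i) ^+ N.
Proof.
case: N => // N _ a_ge0; rewrite exprS mulr_suml; apply: ler_sum => i _.
rewrite exprS ler_wpM2l // lerXn2r ?nnegrE ?sumr_ge0 //.
by rewrite (bigD1 i) //= lerDl sumr_ge0.
Qed.

Lemma sum_exprn_le_cauchy_schwarz (I : finType) (F c a : I -> R) N : (0 < N)%N ->
  (forall i, 0 <= F i) -> (forall i, 0 <= a i) ->
  (forall i, F i <= c i * Num.sqrt (a i)) ->
  \sum_i F i ^+ N <= Num.sqrt (\sum_i c i ^+ (2 * N)) * Num.sqrt (\sum_i a i) ^+ N.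
Proof.
move=> N_gt0 F_ge0 a_ge0 F_le.
have FN_le : \sum_i F i ^+ N <= \sum_i c i ^+ N * Num.sqrt (a i) ^+ N.
  apply: ler_sum => i _; rewrite -exprMn lerXn2r ?nnegrE ?F_le //.
  exact: le_trans (F_ge0 i) (F_le i).
apply: (le_trans FN_le); apply: (le_trans (cauchy_schwarz_sqrt _ _)).
have cE i : (c i ^+ N) ^+ 2 = c i ^+ (2 * N) by rewrite -exprM mulnC.
have aE i : (Num.sqrt (a i) ^+ N) ^+ 2 = a i ^+ N.
  by rewrite -exprM mulnC exprM sqr_sqrtr.
rewrite (eq_bigr _ (fun i _ => cE i)) (eq_bigr _ (fun i _ => aE i)) -sqrtrX ?sumr_ge0 //.
by rewrite ler_wpM2l ?sqrtr_ge0 // ler_sqrt ?exprn_ge0 ?sumr_ge0 // sum_exprn_le.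
Qed.

End PowerSums.

Lemma sqrt_det_gram_le_frob (R : realType) q N m (A : 'M[R]_(q, m)) : q = N ->
  Num.sqrt (\det (A *m A^T)) <= N%:R `^ (- (N%:R / 2)) * frob A ^+ N.
Proof.
move=> <-{N}; have /andP[_ hadamard] := det_gram_hadamard A.
have amgm : \prod_k (A *m A^T) k k <= (frob A ^+ 2 / q%:R) ^+ q.
  have [+ _] := leif_AGM (A := predT) (fun k _ => gram_diag_ge0 A k).
  rewrite card_ord frob_sqr; congr (_ <= (_ / _) ^+ _).
  by apply: eq_bigr => k _; rewrite gram_diagE.
have frob2q_ge0 : 0 <= frob A ^+ 2 / q%:R by rewrite divr_ge0 ?sqr_ge0.
have -> : q%:R `^ (- (q%:R / 2)) * frob A ^+ q = Num.sqrt ((frob A ^+ 2 / q%:R) ^+ q).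
  rewrite powR_Nhalf sqrtrX // sqrtrM ?sqr_ge0 // sqrtrV // sqrtr_sqr.
  by rewrite ger0_norm ?frob_ge0 // exprMn exprVn mulrC.
by rewrite ler_sqrt ?exprn_ge0 // (le_trans hadamard amgm).
Qed.

Section SquareLoss.
Variable R : realType.

Lemma is_derive_mx_entry m q (g : R -> 'M[R]_(m, q)) (t : R) i j :
  derivable g t 1 -> is_derive t (1 : R) (fun s => g s i j) ((derive1 g t) i j).
Proof.
move=> dg; apply: DeriveDef; first exact: (derivable_mxP g t 1).1 dg i j.
by rewrite derive1E derive_mx // mxE.
Qed.

Lemma is_derive_sumr n (h : 'I_n -> R -> R) (t : R) (dh : 'I_n -> R) :
  (forall i, is_derive t (1 : R) (h i) (dh i)) ->
  is_derive t (1 : R) (fun s => \sum_i h i s) (\sum_i dh i).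
Proof. by move=> dh_i; rewrite -fct_sumE; exact: is_derive_sum. Qed.

Lemma is_derive_mulr (f : R -> R) (t : R) df c :
  is_derive t (1 : R) f df -> is_derive t (1 : R) (fun s => c * f s) (c * df).
Proof. exact: is_deriveZ. Qed.

Lemma is_derive_half_sqr (f : R -> R) (t : R) df y :
  is_derive t (1 : R) f df ->
  is_derive t (1 : R) (fun s => 2^-1 * (f s - y) ^+ 2) ((f t - y) * df).
Proof.
move=> df_t; have dfy : is_derive t (1 : R) (f - cst y) (df - 0) by apply: is_deriveB.
have -> : (fun s => 2^-1 * (f s - y) ^+ 2) = 2^-1 \*: (f - cst y) ^+ 2.
  by apply/funext => s; rewrite /= exprfctE.
apply: is_derive_eq; rewrite /= expr1 subr0.
by change (2^-1 * (2 * (f t - y) * df) = (f t - y) * df); field.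
Qed.

Lemma is_derive_mul_sub (f g : R -> R) (t : R) df dg y :
  is_derive t (1 : R) f df -> is_derive t (1 : R) g dg ->
  is_derive t (1 : R) (fun s => (f s - y) * g s) (df * g t + (f t - y) * dg).
Proof.
move=> df_t dg_t; have dfy : is_derive t (1 : R) (f - cst y) (df - 0) by apply: is_deriveB.
have -> : (fun s => (f s - y) * g s) = (f - cst y) * g by [].
apply: is_derive_eq (is_deriveM dfy dg_t) _; rewrite /= subr0.
by change ((f t - y) * dg + g t * df = df * g t + (f t - y) * dg); ring.
Qed.

(* At an interpolating point the residuals vanish, so only the Gauss-Newton
   term of the second derivative survives. *)
Lemma d2_sqloss_interpolation N n (g : 'I_n -> R -> 'cV[R]_N) (Y : 'I_n -> 'cV[R]_N) :
  (forall i t, derivable (g i) t 1) -> (forall i, derivable (derive1 (g i)) 0 1) ->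
  (forall i, g i 0 = Y i) ->
  d2 (fun t => n%:R^-1 * \sum_i 2^-1 * sqnorm2 (g i t - Y i)) 0 =
  n%:R^-1 * \sum_i sqnorm2 (derive1 (g i) 0).
Proof.
move=> dg ddg gY.
have lossE : (fun t => n%:R^-1 * \sum_i 2^-1 * sqnorm2 (g i t - Y i)) =
             (fun t => n%:R^-1 * \sum_i \sum_k 2^-1 * (g i t k 0 - Y i k 0) ^+ 2).
  apply/funext => t; congr (_ * _); apply: eq_bigr => i _.
  by rewrite mulr_sumr; apply: eq_bigr => k _; rewrite !mxE.
have dlossE : derive1 (fun t => n%:R^-1 * \sum_i \sum_k 2^-1 * (g i t k 0 - Y i k 0) ^+ 2) =
    (fun t => n%:R^-1 * \sum_i \sum_k (g i t k 0 - Y i k 0) * derive1 (g i) t k 0).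
  apply/funext => t; rewrite derive1E; apply: derive_val.
  apply: is_derive_mulr; apply: is_derive_sumr => i; apply: is_derive_sumr => k.
  exact/is_derive_half_sqr/is_derive_mx_entry.
rewrite /d2 lossE dlossE derive1E; apply: derive_val.
apply: is_derive_mulr; apply: is_derive_sumr => i; apply: is_derive_sumr => k.
apply: is_derive_eq (is_derive_mul_sub (Y i k 0) (is_derive_mx_entry k 0 (dg i 0))
                                           (is_derive_mx_entry k 0 (ddg i))) _.
by rewrite gY subrr mul0r addr0 expr2.
Qed.


End SquareLoss.

Section MatrixDifferential.
Variable R : realType.

Lemma derive1_line m q (h : 'cV[R]_m -> 'cV[R]_q) z v :
  differentiable h z -> derive1 (fun s => h (z + s *: v)) 0 = 'd h z v.
Proof.
move=> dh; rewrite derive1E -deriveE // /derive.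
suff -> : (fun t : R => t^-1 *: (h (z + (t%:A + 0) *: v) - h (z + 0 *: v))) =
          (fun t : R => t^-1 *: (h (t *: v + z) - h z)) by [].
by apply/funext => t; rewrite scale0r !addr0 [t%:A]mulr1 [z + _]addrC.
Qed.

Lemma mulmx_differentiable a b (M : 'M[R]_(a, b)) (x : 'cV[R]_b) :
  differentiable (fun u : 'cV[R]_b => M *m u) x.
Proof.
have -> : (fun u : 'cV[R]_b => M *m u) = \sum_k (fun u : 'cV[R]_b => u k 0 *: col k M).
  apply/funext => u; rewrite fct_sumE; apply/matrixP => i j.
  by rewrite ord1 mxE summxE; apply: eq_bigr => k _; rewrite !mxE mulrC.
by apply: differentiable_sum => k; apply: differentiableZl; exact: differentiable_coord.
Qed.

Lemma diff_mulmx a b (M : 'M[R]_(a, b)) (x : 'cV[R]_b) :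
  'd (fun u : 'cV[R]_b => M *m u) x = (fun u => M *m u) :> (_ -> _).
Proof.
rewrite (@diff_lin _ _ _ (mulmx M)) // => y.
exact/differentiable_continuous/mulmx_differentiable.
Qed.

Lemma jac_mulmx_comp a b q (h : 'cV[R]_a -> 'cV[R]_q) (M : 'M[R]_(a, b)) x :
  differentiable h (M *m x) -> jac (fun y => h (M *m y)) x = jac h (M *m x) *m M.
Proof.
move=> dh.
have chain : 'd (fun y => h (M *m y)) x = 'd h (M *m x) \o (fun y => M *m y) :> (_ -> _).
  rewrite (_ : (fun y => h (M *m y)) = h \o (fun y => M *m y)) //.
  by rewrite diff_comp ?diff_mulmx //; exact: mulmx_differentiable.
apply/matrixP => i j; rewrite !mxE chain /=.
rewrite -colE [col j M]matrix_sum_delta linear_sum summxE; apply: eq_bigr => k _.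
by rewrite big_ord1 linearZ !mxE mulrC.
Qed.

Lemma mul_delta_mx_col a b (i0 : 'I_a) (j0 : 'I_b) (x : 'cV[R]_b) :
  delta_mx i0 j0 *m x = x j0 0 *: delta_mx i0 0.
Proof.
apply/matrixP => i j; rewrite ord1 !mxE (bigD1 j0) //= big1 ?addr0.
  by rewrite !mxE !eqxx andbT mulrC.
by move=> k k_neq; rewrite mxE (negbTE k_neq) andbF mul0r.
Qed.

End MatrixDifferential.

Section Network.
Variables (R : realType) (d e p : nat -> nat)
  (sigma : forall l, 'cV[R]_(e l) -> 'cV[R]_(p l) -> 'cV[R]_(d l.+1)).

Arguments sigma : clear implicits.

Local Notation layer := (layer d e p sigma).
Local Notation fwd := (fwd d e p sigma).
Local Notation run := (run d e p sigma).
Local Notation net := (net d e p sigma).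
Local Notation fl := (fl d e p sigma).
Local Notation Wpert := (Wpert d e).
Local Notation Bpert := (Bpert p).

Implicit Types (W : forall l, 'M[R]_(e l, d l)) (B : forall l, 'cV[R]_(p l)).

(* The layers l+1, ..., l+k, i.e. [run W B k l.+1] with its codomain indexed
   by k.+1 + l, which is not convertible to k + l.+1. *)
Fixpoint run_tail W B (k l : nat) : 'cV[R]_(d l.+1) -> 'cV[R]_(d (k.+1 + l)) :=
  match k return 'cV[R]_(d l.+1) -> 'cV[R]_(d (k.+1 + l)) with
  | 0 => fun u => u
  | k'.+1 => fun u => layer W B (k'.+1 + l) (@run_tail W B k' l u)
  end.
Arguments run_tail : clear implicits.

Lemma fwd_addn W B k l x : fwd W B (k + l) x = run W B k l (fwd W B l x).
Proof. by elim: k => //= k ->. Qed.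

Lemma run_tailE W B k l x : run W B k.+1 l x = run_tail W B k l (layer W B l x).
Proof. by elim: k => //= k ->. Qed.

Lemma fwd_eq W1 W2 B l x : (forall l', (l' < l)%N -> W1 l' = W2 l') ->
  fwd W1 B l x = fwd W2 B l x.
Proof.
elim: l => //= l IH W12; rewrite IH => [|l' /ltnW]; last exact: W12.
by rewrite /layer W12.
Qed.

Lemma run_tail_eq W1 W2 B k l u : (forall l', (l < l')%N -> W1 l' = W2 l') ->
  run_tail W1 B k l u = run_tail W2 B k l u.
Proof.
move=> W12; elim: k => //= k ->.
by rewrite /layer W12 // addSn ltnS leq_addl.
Qed.

Lemma Wpert_neq W l0 i0 j0 s l : l != l0 -> Wpert W l0 i0 j0 s l = W l.
Proof. by move=> /negbTE l_neq; apply/matrixP => i j; rewrite mxE l_neq addr0. Qed.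

Lemma Wpert_eq W l (i0 : 'I_(e l)) (j0 : 'I_(d l)) s :
  Wpert W l i0 j0 s l = W l + s *: delta_mx i0 j0.
Proof.
apply/matrixP => i j; rewrite !mxE eqxx /= !val_eqE.
by case: (i == i0); case: (j == j0); rewrite /= ?mulr1 ?mulr0.
Qed.

Lemma Wpert0 W l i0 j0 : Wpert W l i0 j0 0 = W.
Proof.
apply: functional_extensionality_dep => l'.
by apply/matrixP => i j; rewrite mxE; case: ifP; rewrite addr0.
Qed.

Lemma Bpert0 B l k0 : Bpert B l k0 0 = B.
Proof.
apply: functional_extensionality_dep => l'.
by apply/matrixP => i j; rewrite mxE ord1; case: ifP; rewrite addr0.
Qed.

Lemma fwd_Wpert W B k l (i0 : 'I_(e l)) (j0 : 'I_(d l)) x s :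
  let xl := fwd W B l x in
  fwd (Wpert W l i0 j0 s) B (k.+1 + l) x =
  run_tail W B k l (sigma l (W l *m xl + s *: (xl j0 0 *: delta_mx i0 0)) (B l)).
Proof.
move=> xl; rewrite fwd_addn run_tailE (@run_tail_eq _ W) => [|l' l_lt]; last first.
  by rewrite Wpert_neq // gtn_eqF.
rewrite (@fwd_eq _ W) => [|l' l_gt]; last by rewrite Wpert_neq // ltn_eqF.
by rewrite /layer Wpert_eq mulmxDl -scalemxAl mul_delta_mx_col.
Qed.

Lemma sum_sqnorm_dnet_le_sharpness L n X Y W B : (0 < n)%N ->
  (forall (i : 'I_n) (l i0 j0 : nat) (t : R),
      derivable (fun s => net (Wpert W l i0 j0 s) B L (X i)) t 1 /\
      derivable (derive1 (fun s => net (Wpert W l i0 j0 s) B L (X i))) t 1) ->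
  (forall (i : 'I_n) (l k0 : nat) (t : R),
      derivable (fun s => net W (Bpert B l k0 s) L (X i)) t 1 /\
      derivable (derive1 (fun s => net W (Bpert B l k0 s) L (X i))) t 1) ->
  (forall i : 'I_n, net W B L (X i) = Y i) ->
  \sum_(l < L) \sum_(i < n) \sum_(i0 < e l) \sum_(j0 < d l)
     sqnorm2 (derive1 (fun s => net (Wpert W l i0 j0 s) B L (X i)) 0)
  <= n%:R * sharpness d e p sigma L n X Y W B.
Proof.
move=> n_gt0 dW dB interp.
have d2W l i0 j0 : d2 (fun t => loss d e p sigma L n X Y (Wpert W l i0 j0 t) B) 0 =
    n%:R^-1 * \sum_i sqnorm2 (derive1 (fun s => net (Wpert W l i0 j0 s) B L (X i)) 0).
  apply: d2_sqloss_interpolation => [i t|i|i]; first exact: (dW i l i0 j0 t).1.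
    exact: (dW i l i0 j0 0).2.
  by rewrite Wpert0.
have d2B_ge0 l k0 : 0 <= d2 (fun t => loss d e p sigma L n X Y W (Bpert B l k0 t)) 0.
  rewrite d2_sqloss_interpolation => [|i t|i|i]; first last.
  - by rewrite Bpert0.
  - exact: (dB i l k0 0).2.
  - exact: (dB i l k0 t).1.
  by rewrite mulr_ge0 ?invr_ge0 //; apply: sumr_ge0 => i _; exact: sumr_sqr_ge0.
rewrite /sharpness mulr_sumr; apply: ler_sum => l _.
rewrite mulrDr ler_wpDr ?mulr_ge0 ?sumr_ge0 // exchange_big mulr_sumr.
apply: ler_sum => i0 _; rewrite exchange_big mulr_sumr.
by apply: ler_sum => j0 _; rewrite d2W mulrA mulfV ?mul1r ?pnatr_eq0 -?lt0n.
Qed.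

Section Jacobian.
Hypothesis sigma_diff : forall l (b : 'cV[R]_(p l)) (z : 'cV[R]_(e l)),
  differentiable (fun u => sigma l u b) z.

Lemma layer_differentiable W B l x : differentiable (layer W B l) x.
Proof.
have -> : layer W B l = (fun u => sigma l u (B l)) \o (fun x => W l *m x) by [].
by apply: differentiable_comp; [exact: mulmx_differentiable | exact: sigma_diff].
Qed.

Lemma run_tail_differentiable W B k l u : differentiable (run_tail W B k l) u.
Proof.
elim: k u => [|k IH] u /=; first exact: (ex_diff (f := id)).
have -> : (fun u => layer W B (k.+1 + l) (run_tail W B k l u)) =
          layer W B (k.+1 + l) \o run_tail W B k l by [].
by apply: differentiable_comp; [exact: IH | exact: layer_differentiable].
Qed.

Lemma frob_jac_fl_le W B L l x : (l < L)%N ->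
  frob (jac (fl W B L l) (fwd W B l x)) * norm2 (fwd W B l x) <=
  specnorm (W l) * Num.sqrt (\sum_(i0 < e l) \sum_(j0 < d l)
     sqnorm2 (derive1 (fun s => net (Wpert W l i0 j0 s) B L x) 0)).
Proof.
move=> l_lt_L; have [k ->] : exists k, L = k.+1 + l by exists (L - l).-1; lia.
rewrite /fl /net addnK; set xl := fwd W B l x; set z := W l *m xl.
pose h u := run_tail W B k l (sigma l u (B l)).
have h_diff v : differentiable h v.
  by apply: differentiable_comp; [exact: sigma_diff | exact: run_tail_differentiable].
have -> : run W B k.+1 l = (fun y => h (W l *m y)) by apply/funext => y; rewrite run_tailE.
rewrite jac_mulmx_comp //.
have dnetE (i0 : 'I_(e l)) (j0 : 'I_(d l)) :
    derive1 (fun s => fwd (Wpert W l i0 j0 s) B (k.+1 + l) x) 0 =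
    xl j0 0 *: 'd h z (delta_mx i0 0).
  transitivity (derive1 (fun s => h (z + s *: (xl j0 0 *: delta_mx i0 0))) 0).
    by congr (derive1 _ 0); apply/funext => s; rewrite fwd_Wpert.
  by rewrite derive1_line // linearZ.
have gradE : \sum_(i0 < e l) \sum_(j0 < d l)
    sqnorm2 (derive1 (fun s => fwd (Wpert W l i0 j0 s) B (k.+1 + l) x) 0) =
    (norm2 xl * frob (jac h z)) ^+ 2.
  rewrite exprMn norm2_sqr frob_sqr [in RHS]exchange_big mulr_sumr.
  apply: eq_bigr => i0 _; rewrite mulr_suml; apply: eq_bigr => j0 _.
  by rewrite dnetE /sqnorm2 mulr_sumr; apply: eq_bigr => r _; rewrite !mxE exprMn.
rewrite gradE sqrtr_sqr ger0_norm ?mulr_ge0 ?norm2_ge0 ?frob_ge0 //.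
rewrite (mulrC (norm2 xl)) mulrA ler_wpM2r ?norm2_ge0 //.
by rewrite mulrC frob_mulmx_le.
Qed.

End Jacobian.

End Network.

Theorem proposition2 (R : realType) (L n : nat) (d e p : nat -> nat)
  (sigma : forall l, 'cV[R]_(e l) -> 'cV[R]_(p l) -> 'cV[R]_(d l.+1))
  (X : 'I_n -> 'cV[R]_(d 0)) (Y : 'I_n -> 'cV[R]_(d L))
  (W : forall l, 'M[R]_(e l, d l)) (B : forall l, 'cV[R]_(p l)) :
  (1 <= d L)%N -> (0 < n)%N ->
  (* each sigma_l is differentiable in its input *)
  (forall l (b : 'cV[R]_(p l)) (z : 'cV[R]_(e l)),
      differentiable (fun u => sigma l u b) z) ->
  (* f is twice differentiable in theta (along every coordinate line) *)
  (forall (i : 'I_n) (l i0 j0 : nat) (t : R),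
      derivable (fun s => net d e p sigma (Wpert d e W l i0 j0 s) B L (X i)) t 1 /\
      derivable (derive1 (fun s => net d e p sigma (Wpert d e W l i0 j0 s) B L (X i))) t 1) ->
  (forall (i : 'I_n) (l k0 : nat) (t : R),
      derivable (fun s => net d e p sigma W (Bpert p B l k0 s) L (X i)) t 1 /\
      derivable (derive1 (fun s => net d e p sigma W (Bpert p B l k0 s) L (X i))) t 1) ->
  (* all inputs of the linear layers are nonzero *)
  (forall (l : 'I_L) (i : 'I_n), fwd d e p sigma W B l (X i) != 0) ->
  (* exact interpolation *)
  (forall i : 'I_n, net d e p sigma W B L (X i) = Y i) ->
  let N := d L in
  let S := sharpness d e p sigma L n X Y W B in
  let xl := fun (l : 'I_L) (i : 'I_n) => fwd d e p sigma W B l (X i) in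
  let Jl := fun (l : 'I_L) (i : 'I_n) =>
              jac (fl d e p sigma W B L l) (xl l i) in
  \sum_(l < L) (n%:R^-1 * \sum_(i < n) volratio (fl d e p sigma W B L l) (xl l i))
    <= (N%:R `^ (- (N%:R / 2))) / n%:R *
       \sum_(l < L) \sum_(i < n) frob (Jl l i) ^+ N
  /\
  (N%:R `^ (- (N%:R / 2))) / n%:R *
       \sum_(l < L) \sum_(i < n) frob (Jl l i) ^+ N
    <= n%:R^-1 *
       Num.sqrt (\sum_(l < L) \sum_(i < n)
                   specnorm (W l) ^+ (2 * N) / norm2 (xl l i) ^+ (2 * N)) *
       (n%:R * S / N%:R) `^ (N%:R / 2).
Proof.
move=> N_gt0 n_gt0 sigma_diff dW dB x_neq0 interp N S xl Jl.
split.
  rewrite mulr_sumr; apply: ler_sum => l _.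
  rewrite mulr_sumr [leRHS]mulr_sumr; apply: ler_sum => i _.
  rewrite mulrC mulrAC ler_wpM2r ?invr_ge0 ?ler0n //.
  exact: sqrt_det_gram_le_frob _ (congr1 d (subnK (ltnW (ltn_ord l)))).
pose a (l : 'I_L) (i : 'I_n) := \sum_(i0 < e l) \sum_(j0 < d l)
  sqnorm2 (derive1 (fun s => net d e p sigma (Wpert d e W l i0 j0 s) B L (X i)) 0).
have a_ge0 l i : 0 <= a l i by do 2 apply: sumr_ge0 => ? _; exact: sumr_sqr_ge0.
have grad_le : \sum_l \sum_i a l i <= n%:R * S.
  exact: sum_sqnorm_dnet_le_sharpness.
have nS_ge0 : 0 <= n%:R * S by apply: le_trans grad_le; do 2 apply: sumr_ge0 => ? _.
have frob_le l i : frob (Jl l i) <= specnorm (W l) / norm2 (xl l i) * Num.sqrt (a l i).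
  rewrite mulrAC ler_pdivlMr ?norm2_gt0 ?x_neq0 //.
  exact: frob_jac_fl_le sigma_diff _ _ _ _ (X i) (ltn_ord l).
have := sum_exprn_le_cauchy_schwarz (I := ('I_L * 'I_n)%type) N_gt0
  (fun q => frob_ge0 (Jl q.1 q.2)) (fun q => a_ge0 q.1 q.2) (fun q => frob_le q.1 q.2).
rewrite -(pair_bigA _ a) => FN_le.
rewrite !pair_bigA /= powR_Nhalf powR_half ?divr_ge0 // sqrtrM // sqrtrV // exprMn exprVn.
under [in X in _ <= X]eq_bigr do rewrite -expr_div_n.
set K := Num.sqrt _ in FN_le *; set T := \sum_q _ in FN_le *.
have T_le : T <= K * Num.sqrt (n%:R * S) ^+ N.
  apply: (le_trans FN_le); rewrite ler_wpM2l ?sqrtr_ge0 // lerXn2r ?nnegrE ?sqrtr_ge0 //.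
  by rewrite ler_sqrt.
rewrite [leRHS](_ : _ = Num.sqrt N%:R ^- N / n%:R * (K * Num.sqrt (n%:R * S) ^+ N)).
  by rewrite ler_wpM2l // divr_ge0 ?invr_ge0 ?exprn_ge0 ?sqrtr_ge0.
by ring.
Qed.
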